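(* Let $n\ge 0$ and $r\ge 1$ be integers and let $x$ be a complex number with $xF_r(x)\neq 0$. Then \[ 2\sum_{j=0}^{n}F_{r-1}(x)^jF_{r+1}(x)^{n-j}=\sum_{j=0}^{n}\left(\frac{L_r(x)}{2}\right)^j\left(F_{r+1}(x)^{n-j}+F_{r-1}(x)^{n-j}\right)=2\,\frac{F_{r+1}(x)^{n+1}-F_{r-1}(x)^{n+1}}{xF_r(x)}. \]
   Context: The Fibonacci polynomials $F_n(x)$ and Lucas polynomials $L_n(x)$ are defined by $F_0(x)=0$, $F_1(x)=1$, $L_0(x)=2$, $L_1(x)=x$ and $G_{n+1}(x)=xG_n(x)+G_{n-1}(x)$. *)

From HB Require Import structures.
From mathcomp Require Import all_boot all_order all_algebra.
From mathcomp Require Import reals.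
From mathcomp Require Export complex.
Set Implicit Arguments. Unset Strict Implicit. Unset Printing Implicit Defensive.
Import Order.TTheory GRing.Theory Num.Theory.
Local Open Scope ring_scope.

Fixpoint Gpoly (R : nzRingType) (g0 g1 : {poly R}) (n : nat) : {poly R} :=
  match n with
  | 0 => g0
  | 1 => g1
  | S ((S m) as k) => 'X * Gpoly g0 g1 k + Gpoly g0 g1 m
  end.

Definition fibp (R : nzRingType) (n : nat) : {poly R} := Gpoly 0 1 n.
Definition lucp (R : nzRingType) (n : nat) : {poly R} := Gpoly 2%:R%:P 'X n.

From HB Require Import structures.
From mathcomp Require Import all_boot all_order all_algebra.
From mathcomp Require Import reals complex.
From mathcomp Require Import ring.
Import Order.TTheory GRing.Theory Num.Theory.
Local Open Scope ring_scope.

(* With a = F_{r+1}(x), b = F_{r-1}(x) one has a - b = x F_r(x) and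
   a + b = L_r(x).  Both sums are then quotients by a - b: the first is the
   geometric sum of a^(n+1) - b^(n+1), and for m = (a + b) / 2 the second
   satisfies (a - b) S_n = 2 (a^(n+1) - b^(n+1)), by induction on n from
   S_(n+1) = a^(n+1) + b^(n+1) + m S_n. *)

Lemma fibpSS (R : nzRingType) k : fibp R k.+2 = 'X * fibp R k.+1 + fibp R k.
Proof. by []. Qed.

Lemma lucpSS (R : nzRingType) k : lucp R k.+2 = 'X * lucp R k.+1 + lucp R k.
Proof. by []. Qed.

Lemma lucp_fibp (R : comNzRingType) k :
  lucp R k.+1 = fibp R k.+2 + fibp R k.
Proof.
suff [-> _] : lucp R k.+1 = fibp R k.+2 + fibp R k /\
              lucp R k.+2 = fibp R k.+3 + fibp R k.+1 by [].
elim: k => [|k [IH1 IH2]].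
  by rewrite lucpSS !fibpSS /lucp /fibp /= polyC_natr; split; ring.
split=> //; rewrite lucpSS IH1 IH2 !fibpSS.
set A := fibp R k.+1; set B := fibp R k; ring.
Qed.

Lemma subr_fibpSS (R : nzRingType) k : fibp R k.+2 - fibp R k = 'X * fibp R k.+1.
Proof. by rewrite fibpSS addrK. Qed.

Lemma mulr_subr_sum_mean (R : comNzRingType) (a b m : R) n :
  2 * m = a + b ->
  (a - b) * \sum_(j < n.+1) m ^+ j * (a ^+ (n - j) + b ^+ (n - j))
   = 2 * (a ^+ n.+1 - b ^+ n.+1).
Proof.
move=> mean_m; elim: n => [|n IH].
  by rewrite big_ord1 !expr0 mul1r; ring.
rewrite big_ord_recl subn0 expr0 mul1r.
have -> : \sum_(j < n.+1) m ^+ bump 0 j * (a ^+ (n.+1 - bump 0 j) + b ^+ (n.+1 - bump 0 j))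
        = m * \sum_(j < n.+1) m ^+ j * (a ^+ (n - j) + b ^+ (n - j)).
  by rewrite mulr_sumr; apply: eq_bigr => j _; rewrite exprS mulrA.
rewrite mulrDr mulrCA IH mulrA (mulrC m) mean_m !(exprS _ n.+1).
set u := a ^+ n.+1; set v := b ^+ n.+1; ring.
Qed.

Lemma sum_geom_mean (F : fieldType) (a b m : F) n :
  a - b != 0 -> 2 * m = a + b ->
  (2 * \sum_(j < n.+1) b ^+ j * a ^+ (n - j)
   = \sum_(j < n.+1) m ^+ j * (a ^+ (n - j) + b ^+ (n - j)))
  /\
  (\sum_(j < n.+1) m ^+ j * (a ^+ (n - j) + b ^+ (n - j))
   = 2 * ((a ^+ n.+1 - b ^+ n.+1) / (a - b))).
Proof.
move=> ab_neq0 mean_m; have mean_sum := @mulr_subr_sum_mean _ a b m n mean_m.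
have geom_sum : a ^+ n.+1 - b ^+ n.+1 = (a - b) * \sum_(j < n.+1) b ^+ j * a ^+ (n - j).
  by rewrite subrXX; congr (_ * _); apply: eq_bigr => j _; rewrite mulrC.
split; apply: (mulfI ab_neq0); rewrite mean_sum.
  by rewrite mulrCA -geom_sum.
by rewrite mulrCA [(a - b) * _]mulrC divfK.
Qed.

Local Open Scope complex_scope.

Theorem theorem11 (R : realType) (n r : nat) (x : R[i]) :
  (1 <= r)%N ->
  x * (fibp _ r).[x] != 0 ->
  (2 * \sum_(j < n.+1) (fibp _ r.-1).[x] ^+ j * (fibp _ r.+1).[x] ^+ (n - j)
   = \sum_(j < n.+1) ((lucp _ r).[x] / 2) ^+ j *
        ((fibp _ r.+1).[x] ^+ (n - j) + (fibp _ r.-1).[x] ^+ (n - j)))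
  /\
  (\sum_(j < n.+1) ((lucp _ r).[x] / 2) ^+ j *
        ((fibp _ r.+1).[x] ^+ (n - j) + (fibp _ r.-1).[x] ^+ (n - j))
   = 2 * (((fibp _ r.+1).[x] ^+ n.+1 - (fibp _ r.-1).[x] ^+ n.+1)
          / (x * (fibp _ r).[x]))).
Proof.
case: r => [//|k] _ /=.
have <- : (fibp R[i] k.+2).[x] - (fibp R[i] k).[x] = x * (fibp R[i] k.+1).[x].
  by rewrite -hornerN -hornerD subr_fibpSS hornerM hornerX.
move=> ab_neq0.
have mean_m : 2 * ((lucp R[i] k.+1).[x] / 2) = (fibp R[i] k.+2).[x] + (fibp R[i] k).[x].
  by rewrite mulrC divfK ?pnatr_eq0 // lucp_fibp hornerD.
exact: (@sum_geom_mean _ _ _ _ n ab_neq0 mean_m).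
Qed.
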